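(* Let $m>0$, $n$ an odd positive integer, $V=[-m/2,m/2]$. For every $D\in\mathcal{CTM}$ and every $j\in\{-\lceil n/2\rceil+1,\dots,0,\dots,n-\lceil n/2\rceil\}$, $$|x_{\lceil n/2\rceil}-x_{\lceil n/2\rceil+j}|\le |j|\cdot\frac{m}{\lceil n/2\rceil-1}.$$
   Context: A dataset is $D=(x_1,\dots,x_n)\in V^n$, indexed so that $x_1\le\dots\le x_n$. $\mathcal{CTM}$ is the set of datasets with $|x_{i+1}-x_i|\ge|x_{j+1}-x_j|$ for all $1\le i<j\le\lceil n/2\rceil-1$ and $|x_i-x_{i-1}|\ge|x_j-x_{j-1}|$ for all $\lceil n/2\rceil+1\le j<i\le n$. *)

From mathcomp Require Import all_boot all_order all_algebra.
Set Implicit Arguments. Unset Strict Implicit. Unset Printing Implicit Defensive.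
Import Order.TTheory GRing.Theory Num.Theory.
Local Open Scope ring_scope.

(* A dataset D = (x_1,...,x_n) is represented by x : nat -> R, 1-based:
   only the values x 1, ..., x n matter. *)

Definition ceilhalf (n : nat) : nat := uphalf n.

Definition in_V (R : realFieldType) (m : R) (n : nat) (x : nat -> R) : Prop :=
  forall i : nat, (1 <= i <= n)%N -> - (m / 2) <= x i <= m / 2.

Definition sorted_ds (R : realFieldType) (n : nat) (x : nat -> R) : Prop :=
  forall i : nat, (1 <= i < n)%N -> x i <= x i.+1.

Definition CTM (R : realFieldType) (n : nat) (x : nat -> R) : Prop :=
  (forall i j : nat, (1 <= i)%N -> (i < j)%N -> (j <= (ceilhalf n).-1)%N ->
     `|x j.+1 - x j| <= `|x i.+1 - x i|) /\
  (forall i j : nat, ((ceilhalf n).+1 <= j)%N -> (j < i)%N -> (i <= n)%N ->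
     `|x j - x j.-1| <= `|x i - x i.-1|).

(* Inside a CTM dataset the consecutive gaps shrink towards the median
   x_c (c = ceil(n/2)): on [x_c, x_n] the sequence is discretely convex and
   on [x_1, x_c] discretely concave.  Hence it stays below (resp. above) its
   chord, so the first k gaps next to the median cover at most a k/(c-1)
   fraction of a half of the data, whose spread is at most m.  For odd n both
   halves consist of c - 1 gaps. *)
From mathcomp Require Import all_boot all_order all_algebra.
From mathcomp Require Import zify lra.
Import Order.TTheory GRing.Theory Num.Theory.
Local Open Scope ring_scope.

Lemma ler_sum_nat_blocks (R : realFieldType) (g : nat -> R) (a b c : nat) :
  (forall i l, (a <= i < b)%N -> (b <= l < c)%N -> g i <= g l) ->
  (c - b)%:R * \sum_(a <= i < b) g i <= (b - a)%:R * \sum_(b <= l < c) g l.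
Proof.
move=> le_g; rewrite !mulr_sumr.
have -> : \sum_(a <= i < b) (c - b)%:R * g i
          = \sum_(a <= i < b) \sum_(b <= l < c) g i.
  by apply: eq_big_nat => i _; rewrite sumr_const_nat mulr_natl.
have -> : \sum_(b <= l < c) (b - a)%:R * g l
          = \sum_(b <= l < c) \sum_(a <= i < b) g l.
  by apply: eq_big_nat => l _; rewrite sumr_const_nat mulr_natl.
rewrite [leRHS]exchange_big_nat.
by apply: ler_sum_nat => i Hi; apply: ler_sum_nat => l Hl; apply: le_g.
Qed.

Lemma convex_seq_chord (R : realFieldType) (x : nat -> R) (a b c : nat) :
  (a <= b <= c)%N ->
  (forall i l, (a <= i <= l)%N -> (l < c)%N ->
     x i.+1 - x i <= x l.+1 - x l) ->
  (c - a)%:R * (x b - x a) <= (b - a)%:R * (x c - x a).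
Proof.
move=> /andP[le_ab le_bc] gap_incr.
have blocks := @ler_sum_nat_blocks R (fun i => x i.+1 - x i) a b c.
rewrite !telescope_sumr // in blocks.
have {}blocks : (c - b)%:R * (x b - x a) <= (b - a)%:R * (x c - x b).
  by apply: blocks => i l /andP[? ?] /andP[? ?]; apply: gap_incr; lia.
have -> : (c - a)%:R = (c - b)%:R + (b - a)%:R :> R.
  by rewrite -natrD; congr _%:R; lia.
lra.
Qed.

Lemma concave_seq_chord (R : realFieldType) (x : nat -> R) (a b c : nat) :
  (a <= b <= c)%N ->
  (forall i l, (a <= i <= l)%N -> (l < c)%N ->
     x l.+1 - x l <= x i.+1 - x i) ->
  (c - a)%:R * (x c - x b) <= (c - b)%:R * (x c - x a).
Proof.
move=> /andP[le_ab le_bc] gap_decr.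
have chord : (c - a)%:R * (- x b - - x a) <= (b - a)%:R * (- x c - - x a).
  apply: (@convex_seq_chord R (fun i => - x i)) => [|i l ail lc].
    by rewrite le_ab le_bc.
  by have := gap_decr i l ail lc; lra.
have -> : (c - b)%:R = (c - a)%:R - (b - a)%:R :> R.
  by rewrite -natrB ?leq_sub2r //; congr _%:R; lia.
lra.
Qed.

Lemma ceilhalf_le (n : nat) : (ceilhalf n <= n)%N.
Proof. by rewrite /ceilhalf leq_uphalf_double -addnn leq_addr. Qed.

Section CTMGaps.

Context {R : realFieldType} {n : nat} {x : nat -> R}.
Hypotheses (x_sorted : sorted_ds n x) (x_CTM : CTM n x).

Lemma ctm_gaps_left (i l : nat) :
  (1 <= i <= l)%N -> (l < ceilhalf n)%N -> x l.+1 - x l <= x i.+1 - x i.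
Proof.
move=> /andP[i_ge1 le_il] l_lt; have := ceilhalf_le n => c_le.
have [->|lt_il] := eqVneq i l; first by [].
have := x_CTM.1 i l i_ge1 ltac:(lia) ltac:(lia).
by rewrite !ger0_norm ?subr_ge0 //; apply: x_sorted; lia.
Qed.

Lemma ctm_gaps_right (i l : nat) :
  (ceilhalf n <= i <= l)%N -> (l < n)%N -> x i.+1 - x i <= x l.+1 - x l.
Proof.
move=> /andP[c_le le_il] l_lt.
have c_gt0 : (0 < ceilhalf n)%N by rewrite uphalf_gt0; lia.
have [->|lt_il] := eqVneq i l; first by [].
have := x_CTM.2 l.+1 i.+1 ltac:(lia) ltac:(lia) ltac:(lia).
by rewrite /= !ger0_norm ?subr_ge0 //; apply: x_sorted; lia.
Qed.

Lemma ctm_chord_right (k : nat) : (ceilhalf n + k <= n)%N ->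
  (n - ceilhalf n)%:R * (x (ceilhalf n + k) - x (ceilhalf n))
    <= k%:R * (x n - x (ceilhalf n)).
Proof.
move=> ck_le; have := @convex_seq_chord R x (ceilhalf n) (ceilhalf n + k) n.
rewrite addKn; apply; first lia.
by move=> i l il ln; apply: ctm_gaps_right; lia.
Qed.

Lemma ctm_chord_left (k : nat) : (k < ceilhalf n)%N ->
  (ceilhalf n).-1%:R * (x (ceilhalf n) - x (ceilhalf n - k))
    <= k%:R * (x (ceilhalf n) - x 1).
Proof.
move=> k_lt; have := @concave_seq_chord R x 1 (ceilhalf n - k) (ceilhalf n).
rewrite subn1 (subKn (ltnW k_lt)); apply; first lia.
by move=> i l il lc; apply: ctm_gaps_left.
Qed.

End CTMGaps.

Lemma sorted_ds_le {R : realFieldType} {n : nat} {x : nat -> R}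
  {i l : nat} :
  sorted_ds n x -> (1 <= i <= l)%N -> (l <= n)%N -> x i <= x l.
Proof.
move=> x_sorted /andP[i_ge1 le_il]; elim: l le_il => [|l IHl]; first by lia.
rewrite leq_eqVlt => /orP[/eqP <- //|lt_il] l_lt.
by apply: (le_trans (IHl lt_il (ltnW l_lt))); apply: x_sorted; lia.
Qed.

Lemma in_V_sub_le {R : realFieldType} {m : R} {n : nat} {x : nat -> R}
  {i l : nat} :
  in_V m n x -> (1 <= i <= n)%N -> (1 <= l <= n)%N -> x i - x l <= m.
Proof. by move=> xV /xV xi /xV xl; lra. Qed.

Lemma ler_chord_scale {R : realFieldType} {h k : nat} {d r m : R} :
  (0 < h)%N -> h%:R * d <= k%:R * r -> r <= m -> d <= k%:R * (m / h%:R).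
Proof.
move=> h_gt0 chord r_le; rewrite mulrA ler_pdivlMr ?ltr0n // mulrC.
by apply: (le_trans chord); rewrite ler_wpM2l.
Qed.

Theorem lemma7p11 (R : realFieldType) (m : R) (n : nat) (x : nat -> R)
  (hm : 0 < m) (hn : odd n) (hVn : in_V m n x) (hsort : sorted_ds n x)
  (hD : CTM n x) (j : int)
  (hj1 : - ((ceilhalf n)%:Z) + 1 <= j) (hj2 : j <= (n%:Z) - (ceilhalf n)%:Z) :
  `|x (ceilhalf n) - x (absz ((ceilhalf n)%:Z + j))|
    <= (absz j)%:R * (m / ((ceilhalf n).-1)%:R).
Proof.
have n_split : n = (ceilhalf n).-1 + ceilhalf n.
  by move/odd_uphalfK: hn; rewrite /ceilhalf; lia.
move: hj1 hj2; set c := ceilhalf n => hj1 hj2.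
have [c1_eq0|c1_gt0] := posnP c.-1.
  have -> : j = 0 by lia.
  by rewrite addr0 subrr normr0 mul0r.
case: j hj1 hj2 => k hj1 hj2.
- have -> : absz (c%:Z + Posz k) = (c + k)%N by lia.
  rewrite distrC ger0_norm; last first.
    by rewrite subr_ge0; apply: (sorted_ds_le hsort); lia.
  apply: (ler_chord_scale c1_gt0 (r := x n - x c)); last first.
    by apply: (in_V_sub_le hVn); lia.
  by rewrite (_ : c.-1 = n - c)%N; [apply: (ctm_chord_right hsort hD)|]; lia.
- have -> : absz (c%:Z + Negz k) = (c - k.+1)%N by lia.
  rewrite ger0_norm; last first.
    by rewrite subr_ge0; apply: (sorted_ds_le hsort); lia.
  apply: (ler_chord_scale c1_gt0 (r := x c - x 1)); last first.
    by apply: (in_V_sub_le hVn); lia.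
  by apply: (ctm_chord_left hsort hD); lia.
Qed.
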